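(* Let $(D,\vec F,0)$ and $(D',\vec F',0')$ be decision graphs and let $\ell:D\to D'$ satisfy $\ell(0)=0'$ and $\ell({\cal O}(v))={\cal O}(\ell(v))$ for all $v\in D$. Let $n\geq1$, and let $L_n$ and $L'_n$ be the Boolean functions associated with the game-graphs $G_n(D)$ and $G_n(D')$. Then $\ell$ maps $\partial G_n(D)$ into $\partial G_n(D')$, and $$L'_n(x)=L_n(x\circ\ell)\qquad\text{for all } x\in\{0,1\}^{\partial G_n(D')}.$$
   Context: **Decision graph.** A decision graph is a triple $(D,\vec F,0)$ where $(D,\vec F)$ is a directed graph, every $w\in D$ is reachable from $0$ by a directed path, $|w|=|v|+1$ for every $(v,w)\in\vec F$ (where $|w|$ denotes the directed graph distance from $0$ to $w$), and ${\cal O}(w):=\{u:(w,u)\in\vec F\}\neq\emptyset$ for all $w$. **Game-graph $G_n(D)$.** It has vertex set $\{w\in D:|w|\leq n\}$ and edges the elements of $\vec F$ between such vertices, with root $0$. Its set of possible outcomes is $\partial G_n(D)=\{w:|w|=n\}$. The turn function is $\tau(v)=1$ if $|v|$ is even and $\tau(v)=2$ if $|v|$ is odd, for $|v|<n$. **Associated Boolean function $L_n$.** For $x:\partial G_n(D)\to\{0,1\}$, extend to $\bar x$ by $\bar x=x$ at level $n$ and, for $|v|<n$, $\bar x(v)=\min_{w\in{\cal O}(v)}\bar x(w)$ if $|v|$ is even and $\bar x(v)=\max_{w\in{\cal O}(v)}\bar x(w)$ if $|v|$ is odd. Set $L_n(x):=\bar x(0)$. Also $(x\circ\ell)(v)=x(\ell(v))$.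 *)

From Stdlib Require Import Arith Classical ClassicalEpsilon.

Section DG.
Variables (D : Type) (E : D -> D -> Prop) (r : D).

Inductive reach : nat -> D -> Prop :=
| reach0 : reach 0 r
| reachS k v w : reach k v -> E v w -> reach (S k) w.

Definition dist (w : D) (k : nat) : Prop :=
  reach k w /\ forall j, j < k -> ~ reach j w.

Definition out (w : D) : D -> Prop := fun u => E w u.

Definition decision_graph : Prop :=
  (forall w, exists k, reach k w) /\
  (forall v w, E v w -> forall k, dist v k -> dist w (S k)) /\
  (forall w, exists u, E w u).

(* the set of outcomes dG_n(D) = { w : |w| = n } *)
Definition boundary (n : nat) : Type := { w : D | dist w n }.

Definition bool_of (P : Prop) : bool :=
  if excluded_middle_informative P then true else false.

Section Ln.
Variables (n : nat) (x : boundary n -> bool).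

Definition xlev (v : D) : bool :=
  match excluded_middle_informative (dist v n) with
  | left h => x (exist _ v h)
  | right _ => false
  end.

(* xbar_m v : the extension \bar x at a vertex v of level n - m;
   minimum over O(v) if the level is even, maximum if odd *)
Fixpoint xbar (m : nat) (v : D) : bool :=
  match m with
  | 0 => xlev v
  | S m' =>
      if Nat.even (n - m)
      then bool_of (forall w, E v w -> xbar m' w = true)
      else bool_of (exists w, E v w /\ xbar m' w = true)
  end.

Definition Ln : bool := xbar n r.
End Ln.
End DG.

Arguments boundary {D} E r n.

(* The map l preserves levels: a path of length k from 0 is sent to one from 0', and in a
   decision graph every path from the root to w has length |w|.  Since l maps O(v) onto
   O(l v), the min/max recursion defining \bar x' at l v and \bar(x o l) at v quantify over
   the same values, so by induction on the height \bar x' o l = \bar(x o l); at the root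
   this is L'_n(x) = L_n(x o l). *)
From Stdlib Require Import Arith Lia ClassicalEpsilon ProofIrrelevance.

Lemma bool_of_iff (P Q : Prop) : (P <-> Q) -> bool_of P = bool_of Q.
Proof.
  intros HPQ; unfold bool_of.
  destruct (excluded_middle_informative P), (excluded_middle_informative Q); tauto.
Qed.

Section DecisionGraph.
Variables (D : Type) (E : D -> D -> Prop) (r : D).

Lemma reach_dist (HD : decision_graph D E r) k w : reach D E r k w -> dist D E r w k.
Proof.
  destruct HD as [_ [Hlevel _]].
  induction 1.
  - split; [constructor | intros j Hj; lia].
  - eapply Hlevel; eauto.
Qed.

Lemma dist_unique w k j : dist D E r w k -> dist D E r w j -> k = j.
Proof.
  intros [Hk Hk'] [Hj Hj'].
  destruct (Nat.lt_total k j) as [H | [H | H]]; auto.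
  - exfalso; exact (Hj' _ H Hk).
  - exfalso; exact (Hk' _ H Hj).
Qed.

End DecisionGraph.

Section Morphism.
Variables (D : Type) (E : D -> D -> Prop) (r : D).
Variables (D' : Type) (E' : D' -> D' -> Prop) (r' : D').
Variables (l : D -> D') (Hl0 : l r = r').
Hypothesis Hl_edge : forall v w, E v w -> E' (l v) (l w).

Lemma reach_map k v : reach D E r k v -> reach D' E' r' k (l v).
Proof.
  induction 1.
  - rewrite Hl0; constructor.
  - econstructor; eauto.
Qed.

Lemma dist_map_iff (HD : decision_graph D E r) (HD' : decision_graph D' E' r') v k :
  dist D E r v k <-> dist D' E' r' (l v) k.
Proof.
  split.
  - intros [Hreach _]; exact (reach_dist _ _ _ HD' _ _ (reach_map _ _ Hreach)).
  - intros Hdist'.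
    destruct (proj1 HD v) as [j Hj].
    assert (Hdist := reach_dist _ _ _ HD _ _ Hj).
    assert (Hdist'j := reach_dist _ _ _ HD' _ _ (reach_map _ _ Hj)).
    rewrite (dist_unique _ _ _ _ _ _ Hdist'j Hdist') in Hdist; exact Hdist.
Qed.

Hypothesis Hl_onto : forall v u, E' (l v) u -> exists w, E v w /\ l w = u.

Section Pullback.
Variable n : nat.
Variable hmap : forall v, dist D E r v n -> dist D' E' r' (l v) n.
Hypothesis hmap_back : forall v, dist D' E' r' (l v) n -> dist D E r v n.

Definition pullback (x : boundary E' r' n -> bool) : boundary E r n -> bool :=
  fun v => x (exist _ (l (proj1_sig v)) (hmap (proj1_sig v) (proj2_sig v))).

Lemma xlev_pullback x v : xlev D' E' r' n x (l v) = xlev D E r n (pullback x) v.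
Proof.
  unfold xlev, pullback.
  destruct (excluded_middle_informative (dist D' E' r' (l v) n)) as [h' | h'];
    destruct (excluded_middle_informative (dist D E r v n)) as [h | h]; simpl.
  - f_equal; f_equal; apply proof_irrelevance.
  - exfalso; exact (h (hmap_back _ h')).
  - exfalso; exact (h' (hmap _ h)).
  - reflexivity.
Qed.

Lemma xbar_pullback x m v : xbar D' E' r' n x m (l v) = xbar D E r n (pullback x) m v.
Proof.
  revert v; induction m as [| m IH]; intros v; simpl.
  - apply xlev_pullback.
  - destruct (Nat.even (n - S m)); apply bool_of_iff; split.
    + intros Hall w Hw; rewrite <- IH; exact (Hall _ (Hl_edge _ _ Hw)).
    + intros Hall u Hu.
      destruct (Hl_onto _ _ Hu) as [w [Hw <-]]; rewrite IH; exact (Hall _ Hw).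
    + intros [u [Hu Hxu]].
      destruct (Hl_onto _ _ Hu) as [w [Hw <-]]; exists w; rewrite <- IH; auto.
    + intros [w [Hw Hxw]]; exists (l w); rewrite IH; auto.
Qed.

Lemma Ln_pullback x : Ln D' E' r' n x = Ln D E r n (pullback x).
Proof. unfold Ln; rewrite <- (xbar_pullback x n r), Hl0; reflexivity. Qed.

End Pullback.
End Morphism.

Theorem lemma8 (D : Type) (E : D -> D -> Prop) (r : D)
  (D' : Type) (E' : D' -> D' -> Prop) (r' : D')
  (HD : decision_graph D E r) (HD' : decision_graph D' E' r')
  (l : D -> D') (Hl0 : l r = r')
  (HlO : forall v : D,
      (forall w, E v w -> E' (l v) (l w)) /\
      (forall u, E' (l v) u -> exists w, E v w /\ l w = u))
  (n : nat) (Hn : 1 <= n) :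
  exists hmap : forall v : D, dist D E r v n -> dist D' E' r' (l v) n,
    forall x : boundary E' r' n -> bool,
      Ln D' E' r' n x =
      Ln D E r n (fun v => x (exist _ (l (proj1_sig v)) (hmap (proj1_sig v) (proj2_sig v)))).
Proof.
  assert (Hl_edge : forall v w, E v w -> E' (l v) (l w)) by (intros v; apply (HlO v)).
  assert (Hl_onto : forall v u, E' (l v) u -> exists w, E v w /\ l w = u)
    by (intros v; apply (HlO v)).
  pose proof (fun v => dist_map_iff D E r D' E' r' l Hl0 Hl_edge HD HD' v n) as Hlevel.
  exists (fun v => proj1 (Hlevel v)).
  intros x.
  exact (Ln_pullback D E r D' E' r' l Hl0 Hl_edge Hl_onto n (fun v => proj1 (Hlevel v)) (fun v => proj2 (Hlevel v)) x).
Qed.
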